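(* For all $n\ge 1$, $$\sum_{\pi\in\mathcal D_n}t^{\mathsf{cyc}_D^+(\pi)}=t\prod_{i=2}^n(t+2i-1)\qquad\text{and}\qquad\sum_{\pi\in\mathcal D_n}t^{\tilde\ell'_D(\pi)}=\prod_{i=2}^n\bigl(1+(2i-1)t\bigr).$$
   Context: Signed permutations of $[n]$ are words $\pi=\pi_1\cdots\pi_n$ where $|\pi_1|\cdots|\pi_n|$ is a permutation $\sigma$ of $[n]$ and each letter may carry a bar ($\bar i=-i$); this is $\mathsf{G}_{2,n}=C_2\wr\mathfrak S_n$ with color $1$ meaning barred. $\mathcal D_n$ is the subgroup of signed permutations having an even number of barred letters. For $1\le|i|<j\le n$, $t^D_{ij}$ is the element such that $\pi\cdot t^D_{ij}$ (for $i>0$) swaps the letters in positions $i$ and $j$, and (for $i<0$) puts in position $j$ the letter from position $|i|$ with its sign changed and in position $|i|$ the letter from position $j$ with its sign changed; for $1<i\le n$, $t^D_{\bar i i}$ is the element such that $\pi\cdot t^D_{\bar ii}$ changes the signs of the letters in positions $1$ and $i$. $\tilde\ell'_D(\pi)$ is the minimal number of factors needed to write $\pi$ as a product of elements of $\mathcal T^D_n=\{t^D_{ij}:1\le|i|<j\le n\}\cup\{t^D_{\bar ii}:1<i\le n\}$. $\mathsf{Cyc}^0(\pi)$ is the set of minima of those cycles of $\sigma$ containing an even number of positions $k$ with $\pi_k$ barred; $\mathsf{cyc}^+_D(\pi)=|\mathsf{Cyc}^0(\pi)\cup\{1\}|$. *)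

From mathcomp Require Import all_boot all_order all_algebra all_fingroup.
Set Implicit Arguments. Unset Strict Implicit. Unset Printing Implicit Defensive.

(* Signed permutations of [n], positions/values 0-indexed ('I_n stands for [n]).
   A pair (s, e) represents the word pi with pi_k = (-1)^(e k) * (s k + 1),
   i.e. s = sigma (the underlying permutation |pi_1|...|pi_n|) and e k = true
   iff the letter in position k is barred (color 1). *)
Definition SP (n : nat) := ({perm 'I_n} * {ffun 'I_n -> bool})%type.

Definition sp_one n : SP n := (1%g, [ffun=> false]).

(* Group product = composition of signed permutations viewed as maps on
   {+-1..+-n}: (p q)(k) = p (q k).  Hence p * t acts on the positions of p. *)
Definition sp_mul n (p q : SP n) : SP n :=
  ((q.1 * p.1)%g, [ffun k => q.2 k (+) p.2 (q.1 k)]).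

Definition nbar n (p : SP n) : nat := #|[set k | p.2 k]|.
Definition inD n (p : SP n) : bool := ~~ odd (nbar p).

Definition tsw n (a b : 'I_n) : SP n := (tperm a b, [ffun=> false]).
Definition tns n (a b : 'I_n) : SP n :=
  (tperm a b, [ffun k => (k == a) || (k == b)]).
(* t_{bar i i}, 1 < i : changes the signs of positions 1 and i *)
Definition tbb n (a b : 'I_n) : SP n := (1%g, [ffun k => (k == a) || (k == b)]).

Definition isgen n (g : SP n) : bool :=
  [exists a : 'I_n, exists b : 'I_n, (a < b) &&
     [|| g == tsw a b, g == tns a b | (val a == 0) && (g == tbb a b)]].

Definition prodw n (s : seq (SP n)) : SP n := foldl (@sp_mul n) (sp_one n) s.

(* minimal number of factors from T^D_n needed to write p (the search bound
   #|SP n| exceeds any such minimal length, since a shortest word has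
   pairwise distinct prefix products) *)
Definition ellD n (p : SP n) : nat :=
  find (fun k => [exists w : k.-tuple (SP n), all (@isgen n) w && (prodw w == p)])
       (iota 0 #|{: SP n}|).

Definition Cyc0 n (p : SP n) : {set 'I_n} :=
  [set k : 'I_n | [forall m in porbit p.1 k, k <= m] &&
                  ~~ odd #|[set m in porbit p.1 k | p.2 m]|].

(* cyc^+_D = |Cyc^0 u {1}|  (position 1 is index 0 here) *)
Definition cycDp n (p : SP n) : nat :=
  #|Cyc0 p :|: [set k : 'I_n | val k == 0]|.

From mathcomp Require Import all_boot all_order all_algebra all_fingroup.
From mathcomp Require Import zify ring.
Set Implicit Arguments. Unset Strict Implicit. Unset Printing Implicit Defensive.
Import GRing.Theory.

(* Every pi in D_n factors uniquely as pi = g_2 ... g_n, where g_m is either the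
   identity or one of the 2m - 1 generators t_{im}, t_{bar i m} (i < m) and
   t_{bar 1 m} that move position m; g_m is read off from the position that pi
   sends to m.  Call a cycle counted if it avoids position 1 and carries an even
   number of bars, so that cyc^+_D = 1 + #counted cycles.  Multiplying by a
   generator only touches the cycles through its two positions, so it destroys
   at most one counted cycle.  When position m is a fixed unbarred point, a
   non-identity g_m merges the counted singleton {m} into another cycle without
   changing that cycle's parity, so it destroys exactly one.  Hence
   cyc^+_D(pi) = n - #{m | g_m <> 1}, which gives the first product, and the
   factorization is a shortest word, so l'_D(pi) = n - cyc^+_D(pi), which gives
   the second. *)

Section PermOrbits.
Variable T : finType.
Implicit Types (s : {perm T}) (x y a b : T).
Local Open Scope group_scope.

Lemma porbit_stable s x y : y \in porbit s x -> s y \in porbit s x.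
Proof. by case/porbitP=> i ->; rewrite -permM -expgSr mem_porbit. Qed.

Lemma porbit_subset s (P : {set T}) x :
  x \in P -> (forall y, y \in P -> s y \in P) -> porbit s x \subset P.
Proof.
move=> xP sP; apply/subsetP => y /porbitP [i ->].
by elim: i => [|i IH]; rewrite ?expg0 ?perm1 // expgSr permM; apply: sP.
Qed.

Lemma eq_porbit_in s s' x :
  {in porbit s x, s' =1 s} -> porbit s' x = porbit s x.
Proof.
move=> eq_s; have E i : (s' ^+ i) x = (s ^+ i) x.
  by elim: i => [|i IH]; rewrite ?expg0 // !expgSr !permM IH eq_s ?mem_porbit.
by apply/setP => y; apply/porbitP/porbitP => -[i ->]; exists i.
Qed.

Lemma porbit_fix s x : s x = x -> porbit s x = [set x].
Proof.
move=> sx; apply/eqP; rewrite eqEsubset sub1set porbit_id andbT.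
by apply: porbit_subset; rewrite ?set11 // => y /set1P ->; rewrite sx set11.
Qed.

Lemma disjoint_porbit s x y :
  porbit s x != porbit s y -> [disjoint porbit s x & porbit s y].
Proof.
apply: contraR => /pred0Pn [z /andP [zx zy]].
have zx' : porbit s z == porbit s x by rewrite eq_porbit_mem.
have zy' : porbit s z == porbit s y by rewrite eq_porbit_mem.
by rewrite -(eqP zx') -(eqP zy').
Qed.

Lemma porbit_mul_tperm s a b : a \notin porbit s b ->
  porbit (tperm a b * s) a = porbit s a :|: porbit s b.
Proof.
move=> nab; set s' := tperm a b * s.
have hab : a != b by apply: contraNneq nab => ->; apply: porbit_id.
have c1 := porbits_mul_tperm s a b; rewrite /= nab hab in c1.
have c2 := porbits_mul_tperm s' a b; rewrite /= hab /s' tpermKg in c2.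
(* [s'] has one cycle fewer than [s], so [a] and [b] share a cycle of [s']. *)
have ab' : a \in porbit s' b.
  by apply/negPn/negP => H; rewrite H /= in c2; move: c1 c2; lia.
have sE y : s y = s' (tperm a b y) by rewrite /s' permM tpermK.
have tP y : y \in porbit s' a -> tperm a b y \in porbit s' a.
  by move=> yP; case: tpermP => _ //; rewrite ?porbit_id // porbit_sym.
apply/eqP; rewrite eqEsubset; apply/andP; split.
  apply: porbit_subset; first by rewrite inE porbit_id.
  move=> y; rewrite /s' permM => Hy.
  have Hy' : tperm a b y \in porbit s a :|: porbit s b.
    by case: tpermP => [_|_|_ _] //; rewrite inE porbit_id ?orbT.
  by move: Hy'; rewrite !inE => /orP [] /porbit_stable ->; rewrite ?orbT.
have sub x : x \in porbit s' a -> porbit s x \subset porbit s' a.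
  move=> xP; apply: porbit_subset => // y yP; rewrite sE.
  exact/porbit_stable/tP.
by rewrite subUset !sub // ?porbit_id // porbit_sym.
Qed.

End PermOrbits.

Section Marks.
Variable T : finType.
Implicit Types (e f : T -> bool) (O A B : {set T}).

Definition odd_marks e O : bool := odd #|[set m in O | e m]|.

Lemma odd_marksE e O : odd_marks e O = \big[addb/false]_(m in O) e m.
Proof.
rewrite /odd_marks -sum1dep_card (big_morph odd oddD (erefl _)) big_mkcondr /=.
by apply: eq_bigr => m _; case: (e m).
Qed.

Lemma odd_marks_mul (t : {perm T}) f e O : {mono t : y / y \in O} ->
  odd_marks [ffun k => f k (+) e (t k)] O = odd_marks f O (+) odd_marks e O.
Proof.
move=> tO; rewrite !odd_marksE.
rewrite (eq_bigr (fun k => f k (+) e (t k))) => [|k _]; last by rewrite ffunE.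
rewrite big_split /= [X in _ = _ (+) X](reindex_inj (@perm_inj _ t)) /=.
by congr (_ (+) _); apply: eq_bigl => y; rewrite tO.
Qed.

Lemma odd_marksU e A B : [disjoint A & B] ->
  odd_marks e (A :|: B) = odd_marks e A (+) odd_marks e B.
Proof.
by move=> dAB; rewrite !odd_marksE -bigU //; apply: eq_bigl => y; rewrite !inE.
Qed.

Lemma odd_marks1 e m : odd_marks e [set m] = e m.
Proof. by rewrite odd_marksE big_set1. Qed.

Lemma card_sep_pair (P : pred {set T}) A B :
  #|[set O in [set A; B] | P O]| = if A == B then (P A : nat) else P A + P B.
Proof.
rewrite -sum1dep_card big_mkcondr /=.
have -> : \sum_(O | O \in [set A; B]) (if P O then 1 else 0) = \sum_(O in [set A; B]) (P O : nat).
  by apply: eq_bigr => O _; case: (P O).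
case: eqP => [<-|/eqP nAB]; first by rewrite setUid big_set1.
by rewrite big_setU1 ?big_set1 // inE.
Qed.

End Marks.

Section SignedPerms.
Variable n : nat.
Implicit Types (p g h : SP n) (O : {set 'I_n}) (a b : 'I_n).

Definition tgen a b (c : bool) : SP n :=
  (tperm a b, [ffun k => c && ((k == a) || (k == b))]).

Lemma tsw_tgen a b : tsw a b = tgen a b false.
Proof. by congr pair; apply/ffunP => k; rewrite !ffunE. Qed.

Lemma tns_tgen a b : tns a b = tgen a b true.
Proof. by congr pair; apply/ffunP => k; rewrite !ffunE. Qed.

Lemma sp_mulA p g h : sp_mul (sp_mul p g) h = sp_mul p (sp_mul g h).
Proof.
congr pair; first by rewrite /= mulgA.
by apply/ffunP => k; rewrite !ffunE permM addbA.
Qed.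

Lemma sp_mul1 p : sp_mul p (sp_one n) = p.
Proof.
case: p => s e; congr pair; first by rewrite /= mul1g.
by apply/ffunP => k; rewrite !ffunE perm1.
Qed.

Lemma sp_mul_tgenK a b c : sp_mul (tgen a b c) (tgen a b c) = sp_one n.
Proof.
congr pair; first by rewrite /= tperm2.
apply/ffunP => k; rewrite !ffunE; case: tpermP => [->|->|_ _]; rewrite ?addbb //.
all: by rewrite !eqxx ?orbT addbb.
Qed.

Lemma sp_mul_tbbK a b : sp_mul (tbb a b) (tbb a b) = sp_one n.
Proof.
congr pair; first by rewrite /= mul1g.
by apply/ffunP => k; rewrite !ffunE perm1 addbb.
Qed.

Lemma prodw_rcons (w : seq (SP n)) g : prodw (rcons w g) = sp_mul (prodw w) g.
Proof. by rewrite /prodw foldl_rcons. Qed.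

Lemma odd_nbar p : odd (nbar p) = odd_marks p.2 [set: 'I_n].
Proof. by rewrite /nbar /odd_marks; congr odd; apply: eq_card => k; rewrite !inE. Qed.

Lemma odd_marks_tgen a b c O : a != b -> a \in O -> b \in O ->
  odd_marks (tgen a b c).2 O = false.
Proof.
move=> hab aO bO; rewrite /odd_marks.
have -> : [set k in O | (tgen a b c).2 k] = if c then [set a; b] else set0.
  case: c; apply/setP => k; rewrite !inE ffunE /= ?andbF //.
  by case: eqP => [->|_]; case: eqP => [->|_]; rewrite ?aO ?bO ?andbF ?orbT.
by case: c; rewrite ?cards0 // cards2 hab.
Qed.

Lemma inD_mul p g : inD (sp_mul p g) = (inD p == inD g).
Proof.
rewrite /inD !odd_nbar odd_marks_mul; last by move=> y; rewrite !inE.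
by case: (odd_marks g.2 _); case: (odd_marks p.2 _).
Qed.

Lemma inD_one : inD (sp_one n).
Proof.
by rewrite /inD /nbar (_ : [set k | _] = set0) ?cards0 //; apply/setP => k; rewrite !inE ffunE.
Qed.

Lemma inD_tgen a b c : a != b -> inD (tgen a b c).
Proof. by move=> hab; rewrite /inD odd_nbar odd_marks_tgen ?inE. Qed.

Lemma inD_tbb a b : a != b -> inD (tbb a b).
Proof.
move=> hab; rewrite /inD /nbar (_ : [set k | _] = [set a; b]) ?cards2 ?hab //.
by apply/setP => k; rewrite !inE ffunE.
Qed.

Lemma cycDp_one : cycDp (sp_one n) = n.
Proof.
rewrite /cycDp -[RHS](card_ord n); apply: eq_card => k.
suff kC : k \in Cyc0 (sp_one n) by rewrite in_setU kC.
rewrite inE porbit_fix ?perm1 //; apply/andP; split.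
  by apply/forallP => m; apply/implyP; rewrite inE => /eqP ->.
by rewrite (_ : [set m in _ | _] = set0) ?cards0 //; apply/setP => m; rewrite !inE ffunE andbF.
Qed.

End SignedPerms.

Section EvenCycles.
Variable n : nat.
Implicit Types (p q : SP n) (O : {set 'I_n}) (a b m : 'I_n).

Definition off0 : {set 'I_n} := [set k : 'I_n | val k != 0%N].

Definition even_cycle p O := (O \subset off0) && ~~ odd_marks p.2 O.

Definition ecycles p := #|[set O in porbits p.1 | even_cycle p O]|.
(* Cyc0 without position 1 is in bijection, via its cycle, with the even cycles avoiding position 1. *)
Lemma cycDp_ecycles p : cycDp p = #|[set k : 'I_n | val k == 0%N]| + ecycles p.
Proof.
rewrite /cycDp; set C := Cyc0 p; set Z0 := [set k : 'I_n | val k == 0%N].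
rewrite -(cardsID off0 (C :|: Z0)) addnC.
have -> : (C :|: Z0) :\: off0 = Z0.
  by apply/setP => k; rewrite !inE; case: eqP; rewrite ?orbT ?andbF ?orbF.
have -> : (C :|: Z0) :&: off0 = C :&: off0.
  by apply/setP => k; rewrite !inE; case: eqP; rewrite ?orbT ?andbF ?orbF.
congr (_ + _).
have inj : {in C :&: off0 &, injective (porbit p.1)}.
  move=> k k' /setIP [+ _] /setIP [+ _] e.
  rewrite !inE => /andP [/forallP mk _] /andP [/forallP mk' _].
  have := mk k'; have := mk' k.
  rewrite e porbit_id -e porbit_id /= => h1 h2.
  by apply/val_inj/eqP; rewrite eqn_leq h1 h2.
rewrite /ecycles -(card_in_imset inj); apply: eq_card => O.
apply/imsetP/idP.
  case=> k /setIP [kC kZ] ->; rewrite inE imset_f //=.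
  move: kC; rewrite inE => /andP [/forallP mk ev]; rewrite /even_cycle /odd_marks ev andbT.
  apply/subsetP => m mk'; move: kZ (mk m); rewrite !inE mk' /=; lia.
rewrite inE => /andP [/imsetP [x _ ->] /andP [/subsetP sZ ev]].
have [k kO kmin] := @arg_minnP _ x (mem (porbit p.1 x)) val (porbit_id _ x).
exists k; last by apply/eqP; rewrite eq_porbit_mem porbit_sym.
have ek : porbit p.1 k = porbit p.1 x by apply/eqP; rewrite eq_porbit_mem.
rewrite !inE ek; move: ev; rewrite /odd_marks => -> /=; rewrite andbT.
apply/andP; split; last by have := sZ k kO; rewrite inE.
by apply/forallP => m; apply/implyP; exact: kmin.
Qed.
Definition ecycles_off p a b :=
  #|[set O in porbits p.1 | [&& even_cycle p O, a \notin O & b \notin O]]|.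

Lemma ecycles_split p a b :
  ecycles p = ecycles_off p a b
            + #|[set O in [set porbit p.1 a; porbit p.1 b] | even_cycle p O]|.
Proof.
rewrite /ecycles /ecycles_off.
rewrite -(cardsID [set O : {set 'I_n} | (a \notin O) && (b \notin O)]).
congr (_ + _); apply: eq_card => O; rewrite !inE; first by rewrite -!andbA.
apply/idP/idP.
  case/and3P => + /imsetP [x _ eO] ->; rewrite andbT eO negb_and !negbK.
  by case/orP => H; apply/orP; [left|right]; rewrite eq_porbit_mem porbit_sym.
by case/andP => /orP [] /eqP -> ->; rewrite imset_f // porbit_id ?andbF.
Qed.

Definition agree_off p q a b :=
  forall y, y != a -> y != b -> q.1 y = p.1 y /\ q.2 y = p.2 y.

Lemma ecycles_off_subset p q a b : agree_off p q a b ->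
  [set O in porbits p.1 | [&& even_cycle p O, a \notin O & b \notin O]] \subset
  [set O in porbits q.1 | [&& even_cycle q O, a \notin O & b \notin O]].
Proof.
move=> pq; apply/subsetP => O; rewrite !inE => /andP [/imsetP [x _ ->]].
case/and3P => eO na nb; rewrite na nb !andbT.
have ag y : y \in porbit p.1 x -> y != a /\ y != b.
  by move=> yO; split; apply/eqP => e; [move: na|move: nb]; rewrite -e yO.
have Eq : porbit q.1 x = porbit p.1 x.
  by apply: eq_porbit_in => y /ag [ya yb]; case: (pq y ya yb).
rewrite /even_cycle /odd_marks in eO *.
have -> : [set m in porbit p.1 x | q.2 m] = [set m in porbit p.1 x | p.2 m].
  apply/setP => y; rewrite !inE; case yO: (y \in _) => //=.
  by case: (ag y yO) => ya yb; case: (pq y ya yb).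
by rewrite -{1}Eq imset_f.
Qed.

Lemma eq_ecycles_off p q a b : agree_off p q a b ->
  ecycles_off p a b = ecycles_off q a b.
Proof.
move=> pq; apply/eqP; rewrite eqn_leq !subset_leq_card ?ecycles_off_subset //.
by move=> y ya yb; case: (pq y ya yb) => -> ->.
Qed.

Lemma agree_off_tgen p a b c : agree_off p (sp_mul p (tgen a b c)) a b.
Proof.
move=> y ya yb; have ty : tperm a b y = y by rewrite tpermD // eq_sym.
by rewrite /= permM !ffunE ty (negbTE ya) (negbTE yb) andbF.
Qed.

Lemma agree_off_tbb p a b : agree_off p (sp_mul p (tbb a b)) a b.
Proof.
by move=> y ya yb; rewrite /= permM !ffunE perm1 (negbTE ya) (negbTE yb).
Qed.

Lemma ecycles_agree_off_le p q a b : agree_off p q a b ->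
  porbit p.1 a = porbit p.1 b -> ecycles p <= ecycles q + 1.
Proof.
move=> pq eAB; rewrite (ecycles_split p a b) (ecycles_split q a b).
rewrite (eq_ecycles_off pq) card_sep_pair eAB eqxx -addnA leq_add2l.
exact: leq_trans (leq_b1 _) (leq_addl _ _).
Qed.

Lemma even_cycle1 p m : val m != 0%N -> ~~ p.2 m -> even_cycle p [set m].
Proof. by move=> m0 em; rewrite /even_cycle sub1set inE m0 odd_marks1. Qed.

End EvenCycles.

Section GeneratorSteps.
Variable n : nat.
Implicit Types (p g : SP n) (a b m : 'I_n).

Section Merge.
Variables (p : SP n) (a b : 'I_n) (c : bool).
Hypothesis nab : a \notin porbit p.1 b.
Local Notation p' := (sp_mul p (tgen a b c)).
Local Notation A := (porbit p.1 a).
Local Notation B := (porbit p.1 b).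

Let hab : a != b.
Proof. by apply: contraNneq nab => ->; apply: porbit_id. Qed.

Let AB : A != B.
Proof. by rewrite eq_porbit_mem. Qed.

Lemma porbit_mul_tgen : porbit p'.1 a = A :|: B /\ porbit p'.1 b = A :|: B.
Proof.
have mA : porbit p'.1 a = A :|: B by apply: porbit_mul_tperm.
by rewrite -mA; split => //; apply/eqP; rewrite eq_porbit_mem mA inE porbit_id orbT.
Qed.

Lemma even_cycle_mul_tgen : even_cycle p' (A :|: B) =
  [&& A \subset off0 n, B \subset off0 n & odd_marks p.2 A == odd_marks p.2 B].
Proof.
rewrite /even_cycle subUset -andbA /= odd_marks_mul; last first.
  by move=> y; rewrite !inE; case: tpermP => [->|->|//]; rewrite !porbit_id ?orbT.
rewrite odd_marks_tgen ?inE ?porbit_id ?orbT // odd_marksU ?disjoint_porbit //.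
by case: (odd_marks _ A); case: (odd_marks _ B).
Qed.

Lemma ecycles_mul_tgen_merge :
  ecycles p' + even_cycle p A + even_cycle p B = ecycles p + even_cycle p' (A :|: B).
Proof.
rewrite (ecycles_split p a b) (ecycles_split p' a b).
rewrite (eq_ecycles_off (@agree_off_tgen _ p a b c)) !card_sep_pair.
have [-> ->] := porbit_mul_tgen; rewrite eqxx (negbTE AB); lia.
Qed.

End Merge.

Lemma ecycles_mul_tbb p a b : val a == 0%N ->
  ecycles (sp_mul p (tbb a b)) + even_cycle p (porbit p.1 b)
  = ecycles p + even_cycle (sp_mul p (tbb a b)) (porbit p.1 b).
Proof.
move=> a0; set p' := sp_mul _ _; have p'1 : p'.1 = p.1 by rewrite /= mul1g.
have odd0 q : even_cycle q (porbit p.1 a) = false.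
  by apply/negbTE/nandP; left; apply/subsetPn; exists a; rewrite ?porbit_id // inE negbK.
have pair q : #|[set O in [set porbit p.1 a; porbit p.1 b] | even_cycle q O]|
              = even_cycle q (porbit p.1 b).
  by rewrite card_sep_pair odd0; case: eqP => [<-|]; rewrite ?odd0.
rewrite (ecycles_split p a b) (ecycles_split p' a b) p'1 !pair.
rewrite (eq_ecycles_off (@agree_off_tbb _ p a b)) -/p'; lia.
Qed.

Lemma ecycles_mul_tgen p a b c : a != b ->
  ecycles p <= ecycles (sp_mul p (tgen a b c)) + 1.
Proof.
move=> hab; have [ab|nab] := boolP (a \in porbit p.1 b).
  apply: (ecycles_agree_off_le (@agree_off_tgen _ p a b c)).
  by apply/eqP; rewrite eq_porbit_mem.
have := ecycles_mul_tgen_merge c nab; rewrite even_cycle_mul_tgen //.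
rewrite /even_cycle; case: (_ \subset _); case: (_ \subset _);
  case: (odd_marks _ _); case: (odd_marks _ _) => /=; lia.
Qed.

Lemma ecycles_mul_gen p g : isgen g -> ecycles p <= ecycles (sp_mul p g) + 1.
Proof.
case/existsP => a /existsP [b /andP [lt_ab]].
have hab : a != b by rewrite neq_ltn lt_ab.
case/or3P => [/eqP->|/eqP->|/andP [a0 /eqP->]].
- by rewrite tsw_tgen ecycles_mul_tgen.
- by rewrite tns_tgen ecycles_mul_tgen.
- have := ecycles_mul_tbb p b a0; have := leq_b1 (even_cycle p (porbit p.1 b)); lia.
Qed.

Lemma cycDp_word (w : seq (SP n)) : all (@isgen n) w -> n <= cycDp (prodw w) + size w.
Proof.
elim/last_ind: w => [|w g IH]; first by rewrite /prodw /= cycDp_one addn0.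
rewrite all_rcons => /andP [gg /IH le_n]; rewrite prodw_rcons size_rcons.
have := ecycles_mul_gen (prodw w) gg; rewrite !cycDp_ecycles in le_n *; lia.
Qed.

Section FixedPoint.
Variables (p : SP n) (m : 'I_n).
Hypotheses (m0 : val m != 0%N) (pm : p.1 m = m) (em : ~~ p.2 m).

Let fm : porbit p.1 m = [set m]. Proof. exact: porbit_fix. Qed.

Lemma ecycles_mul_tgen_fix a c : a != m ->
  ecycles (sp_mul p (tgen a m c)) + 1 = ecycles p.
Proof.
move=> ham; have nam : a \notin porbit p.1 m by rewrite fm inE.
have := ecycles_mul_tgen_merge c nam; rewrite even_cycle_mul_tgen // fm.
rewrite (even_cycle1 m0 em) sub1set inE m0 odd_marks1 (negbTE em) /even_cycle.
case: (_ \subset _); case: (odd_marks _ _) => /=; lia.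
Qed.

Lemma ecycles_mul_tbb_fix a : val a == 0%N ->
  ecycles (sp_mul p (tbb a m)) + 1 = ecycles p.
Proof.
move=> a0; have := ecycles_mul_tbb p m a0; rewrite fm (even_cycle1 m0 em).
rewrite /even_cycle odd_marks1 /= !ffunE eqxx orbT perm1 (negbTE em) andbF; lia.
Qed.

End FixedPoint.
End GeneratorSteps.

Section Factorization.
Variable n : nat.
Local Notation N := n.+1.
Implicit Types (p q : SP N) (m : 'I_N).

(* The 2m+2 coset representatives of the stabiliser of position m in D_(m+1):
   c = 0 is the identity, c = 1 is t_{bar 1 m}, and c = 2 + 2a + b is
   t_{a m} (b = false) or t_{bar a m} (b = true). *)
Definition step m (c : nat) : SP N :=
  if c == 0%N then sp_one N else if c == 1%N then tbb ord0 m
  else tgen (inord ((c - 2)./2)) m (odd c).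

Variant step_spec m (c : nat) : SP N -> Type :=
  | StepOne of c = 0%N : step_spec m c (sp_one N)
  | StepTbb of c = 1%N : step_spec m c (tbb ord0 m)
  | StepTgen (a : 'I_N) (b : bool) of a < m & c = (2 + 2 * a + b)%N :
      step_spec m c (tgen a m b).

Lemma stepP m c : c < 2 * m + 2 -> step_spec m c (step m c).
Proof.
rewrite /step => lt_c; case: eqP => [|c0]; first exact: StepOne.
case: eqP => [|c1]; first exact: StepTbb.
have lt_a : (c - 2)./2 < m by lia.
have a_val : nat_of_ord (inord (c - 2)./2 : 'I_N) = (c - 2)./2.
  by rewrite inordK // (leq_trans lt_a) // ltnW.
by apply: StepTgen; rewrite a_val //; case: (boolP (odd c)); lia.
Qed.

Lemma step_tgen m (a : 'I_N) (b : bool) : step m (2 + 2 * a + b) = tgen a m b.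
Proof.
rewrite /step.
have [-> ->] : (2 + 2 * a + b == 0)%N = false /\ (2 + 2 * a + b == 1)%N = false.
  by split; lia.
have -> : ((2 + 2 * a + b - 2)./2 = a)%N by case: b; lia.
by rewrite inord_val; congr tgen; case: b => /=; lia.
Qed.

Lemma mul_stepK p m c : sp_mul (sp_mul p (step m c)) (step m c) = p.
Proof.
rewrite sp_mulA /step; case: eqP => _; first by rewrite !sp_mul1.
by case: eqP => _; rewrite ?sp_mul_tbbK ?sp_mul_tgenK sp_mul1.
Qed.

Lemma inD_step m c : 0 < m -> c < 2 * m + 2 -> inD (step m c).
Proof.
move=> m0 /stepP [_|_|a b lt_am _]; first exact: inD_one.
  by apply: inD_tbb; rewrite -val_eqE /= eq_sym -lt0n.
by apply: inD_tgen; rewrite -val_eqE neq_ltn lt_am.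
Qed.

Lemma isgen_step m c : 0 < m -> c < 2 * m + 2 -> c != 0%N -> isgen (step m c).
Proof.
move=> m0 /stepP [->//|_|a b lt_am _] _; apply/existsP.
  by exists ord0; apply/existsP; exists m; rewrite m0 eqxx !orbT.
exists a; apply/existsP; exists m; rewrite lt_am.
by case: b; rewrite -?tns_tgen -?tsw_tgen eqxx ?orbT.
Qed.

Lemma step_above m c (j : 'I_N) : c < 2 * m + 2 -> m < j ->
  (step m c).1 j = j /\ (step m c).2 j = false.
Proof.
move=> /stepP [_|_|a b lt_am _] lt_mj; rewrite /= ?perm1 ?ffunE //.
  by rewrite -!val_eqE /=; split=> //; lia.
have [ja jm] : j != a /\ j != m by rewrite -!val_eqE /=; split; lia.
by rewrite (negbTE ja) (negbTE jm) andbF tpermD // eq_sym.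
Qed.

Definition inD_below (k : nat) p :=
  inD p && [forall j : 'I_N, (k <= j) ==> (p.1 j == j) && ~~ p.2 j].

Lemma inD_below_fix k p (j : 'I_N) : inD_below k p -> k <= j -> p.1 j = j /\ p.2 j = false.
Proof.
by case/andP => _ /forallP /(_ j) /implyP H /H /andP [/eqP -> /negbTE ->].
Qed.

Lemma inD_belowS m p :
  inD_below m p = [&& inD_below m.+1 p, p.1 m == m & ~~ p.2 m].
Proof.
rewrite /inD_below; case: (inD p) => //=; apply/forallP/and3P.
  move=> H; have /implyP/(_ (leqnn m))/andP [pm em] := H m; split => //.
  by apply/forallP => j; apply/implyP => /ltnW; apply/implyP/H.
case=> /forallP H /eqP pm em j; apply/implyP; rewrite leq_eqVlt => /orP [/eqP/val_inj <-|].
  by rewrite pm eqxx.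
by move=> lt_mj; apply: (implyP (H j)).
Qed.

Lemma inD_below_mul_step q m c : 0 < m -> c < 2 * m + 2 ->
  inD_below m.+1 q -> inD_below m.+1 (sp_mul q (step m c)).
Proof.
move=> m0 lt_c qm; apply/andP; split.
  by rewrite inD_mul (inD_step m0 lt_c); case/andP: qm => ->.
apply/forallP => j; apply/implyP => lt_mj.
have [s1 s2] := step_above lt_c lt_mj; have [q1 q2] := inD_below_fix qm lt_mj.
by rewrite /= permM s1 q1 ffunE s2 s1 q2 eqxx.
Qed.

Definition step_index m p : nat :=
  let a := (p.1^-1)%g m in if a == m then nat_of_bool (p.2 m) else (2 + 2 * a + p.2 a)%N.

Lemma step_index_mul q m c : 0 < m -> c < 2 * m + 2 -> inD_below m q ->
  step_index m (sp_mul q (step m c)) = c.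
Proof.
move=> m0 lt_c qm; have [q1 q2] := inD_below_fix qm (leqnn m).
have invE (s : {perm 'I_N}) x : s x = m -> (s^-1)%g m = x by move=> <-; rewrite permK.
rewrite /step_index; case: stepP => // [->|->|a b lt_am ->].
- by rewrite (invE _ m) /= ?permM ?perm1 // eqxx !ffunE perm1 q2.
- by rewrite (invE _ m) /= ?permM ?perm1 // eqxx !ffunE perm1 q2 eqxx orbT.
have am : a != m by rewrite -val_eqE neq_ltn lt_am.
rewrite (invE _ a) /= ?permM ?tpermL // (negbTE am) !ffunE eqxx tpermL q2.
by case: b.
Qed.

Lemma step_index_lt p m : inD_below m.+1 p -> step_index m p < 2 * m + 2.
Proof.
move=> pm; rewrite /step_index; set a := (p.1^-1)%g m.
have pa : p.1 a = m by rewrite permKV.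
case: eqP => [_|/eqP am]; first by case: (p.2 m); lia.
suff lt_am : a < m by case: (p.2 a); lia.
rewrite ltn_neqAle -[(_ != _)%N]/(a != m) am leqNgt; apply/negP => lt_ma.
by have [pa' _] := inD_below_fix pm lt_ma; move: am; rewrite -{1}pa pa' eqxx.
Qed.

Lemma inD_below_mul_step_index p m : 0 < m -> inD_below m.+1 p ->
  inD_below m (sp_mul p (step m (step_index m p))).
Proof.
move=> m0 pm; rewrite inD_belowS inD_below_mul_step ?step_index_lt //=.
rewrite /step_index; set a := (p.1^-1)%g m; have pa : p.1 a = m by rewrite permKV.
have [am|am] := eqVneq a m.
  rewrite am in pa; rewrite /step; case em: (p.2 m) => /=;
    by rewrite permM perm1 pa !ffunE perm1 ?eqxx ?orbT em.
by rewrite step_tgen /= permM tpermR pa !ffunE eqxx orbT andbT tpermR addbb.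
Qed.

Lemma cycDp_mul_step q m c : 0 < m -> c < 2 * m + 2 -> inD_below m q ->
  cycDp (sp_mul q (step m c)) + (c != 0%N) = cycDp q.
Proof.
move=> m0 lt_c qm; have [q1 q2] := inD_below_fix qm (leqnn m).
have m0' : val m != 0%N by rewrite -lt0n.
rewrite !cycDp_ecycles -addnA; congr (_ + _).
case: stepP => // [->|->|a b lt_am ->]; first by rewrite sp_mul1 addn0.
  by apply: ecycles_mul_tbb_fix; rewrite ?q2.
by apply: ecycles_mul_tgen_fix; rewrite ?q2 // -val_eqE neq_ltn lt_am.
Qed.

End Factorization.

Section Counting.
Variable n : nat.
Local Notation N := n.+1.
Implicit Types (p q : SP N).

Lemma cycDp_gt0 p : 0 < cycDp p.
Proof. by rewrite /cycDp card_gt0; apply/set0Pn; exists ord0; rewrite !inE eqxx orbT. Qed.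

Lemma cycDp_le p : cycDp p <= N.
Proof. by rewrite /cycDp -[X in _ <= X](card_ord N) max_card. Qed.

Lemma inD_belowN p : inD_below N p = inD p.
Proof.
by rewrite /inD_below; case: (inD p) => //=; apply/forallP => j; rewrite leqNgt ltn_ord.
Qed.

Lemma inD_below1 p : inD_below 1 p = (p == sp_one N).
Proof.
apply/idP/eqP => [pD|->]; last first.
  by rewrite /inD_below inD_one; apply/forallP => j; rewrite /= perm1 ffunE eqxx implybT.
have ord0P (j : 'I_N) : j = ord0 \/ 0 < j.
  by case: (posnP j) => [j0|]; [left; apply: val_inj|right].
have fix_pos (j : 'I_N) : 0 < j -> p.1 j = j /\ p.2 j = false.
  exact: inD_below_fix pD.
have p0 : p.1 ord0 = ord0.
  have [//|/fix_pos [+ _]] := ord0P (p.1 ord0).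
  by move/(can_inj (permK p.1)) => ->.
have e0 : p.2 ord0 = false.
  apply/negP => e0; case/andP: pD; rewrite /inD /nbar (_ : [set k | p.2 k] = [set ord0]) ?cards1 //.
  apply/setP => k; rewrite !inE; have [->|k0] := ord0P k; first by rewrite e0 eqxx.
  by have [_ ->] := fix_pos k k0; apply/esym/eqP => k0'; rewrite k0' in k0.
case: p p0 e0 fix_pos {pD} => s e /= p0 e0 fix_pos; congr pair.
  by apply/permP => j; rewrite perm1; have [->|/fix_pos []] := ord0P j.
by apply/ffunP => j; rewrite ffunE; have [->|/fix_pos []] := ord0P j.
Qed.

Lemma inD_below_decomp p (m : 'I_N) : 0 < m -> inD_below m.+1 p ->
  exists q c, [/\ c < 2 * m + 2, inD_below m q, p = sp_mul q (step m c)
                & cycDp p + (c != 0%N) = cycDp q].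
Proof.
move=> m0 pm; set c := step_index m p; exists (sp_mul p (step m c)), c.
have lt_c : c < 2 * m + 2 by apply: step_index_lt.
have qm : inD_below m (sp_mul p (step m c)) by apply: inD_below_mul_step_index.
split => //; first by rewrite mul_stepK.
by rewrite -{1}(mul_stepK p m c) cycDp_mul_step.
Qed.

Lemma cycDp_inD_below m p : 0 < m -> m <= N -> inD_below m p -> N < cycDp p + m.
Proof.
elim: m p => [//|m IH] p _ lt_mN; case: (posnP m) => [->|m0].
  by rewrite inD_below1 => /eqP ->; rewrite cycDp_one addn1.
case/(@inD_below_decomp _ (Ordinal lt_mN) m0) => q [c [_ qm _ cq]].
have := IH q m0 (ltnW lt_mN) qm.
by have := leq_b1 (c != 0%N); lia.
Qed.

Lemma inD_below_word m p : 0 < m -> m <= N -> inD_below m p ->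
  exists w : seq (SP N), [/\ all (@isgen N) w, prodw w = p & size w = N - cycDp p].
Proof.
elim: m p => [//|m IH] p _ lt_mN; case: (posnP m) => [->|m0].
  by rewrite inD_below1 => /eqP ->; exists [::]; rewrite cycDp_one subnn.
case/(@inD_below_decomp _ (Ordinal lt_mN) m0) => q [c [lt_c qm -> cq]].
have [w [gen_w wq size_w]] := IH q m0 (ltnW lt_mN) qm.
have := cycDp_le q; case: (eqVneq c 0%N) cq => [-> _ | c0 /= cq] le_qN.
  by exists w; rewrite /step /= sp_mul1.
exists (rcons w (step (Ordinal lt_mN) c)); split.
- by rewrite all_rcons gen_w (isgen_step (m := Ordinal lt_mN) m0 lt_c c0).
- by rewrite prodw_rcons wq.
- by rewrite size_rcons size_w; lia.
Qed.

End Counting.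

Section GeneratingFunction.
Variable n : nat.
Local Notation N := n.+1.
Local Open Scope ring_scope.

Lemma sum_inD_belowS (V : nmodType) (F : SP N -> V) (m : 'I_N) : (0 < m)%N ->
  \sum_(p | inD_below m.+1 p) F p =
  \sum_(q | inD_below m q) \sum_(c < (2 * m).+2) F (sp_mul q (step m c)).
Proof.
move=> m0; have le_m : ((2 * m).+2 <= (2 * n).+2)%N by rewrite !ltnS leq_mul2l /= -ltnS.
rewrite [RHS](eq_bigr (fun q => \sum_(c < (2 * n).+2 | (c < (2 * m).+2)%N)
                                  F (sp_mul q (step m c)))); last first.
  by move=> q _; apply: (big_ord_widen _ (fun c : nat => F (sp_mul q (step m c))) le_m).
rewrite pair_big_dep /= (reindex_onto (fun qc : SP N * 'I_(2 * n).+2 => sp_mul qc.1 (step m qc.2))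
   (fun p => (sp_mul p (step m (step_index m p)), inord (step_index m p)))) /=; last first.
  move=> p pm; have lt_c := step_index_lt pm.
  by rewrite inordK ?mul_stepK // (leq_trans _ le_m) // -addn2.
apply: eq_bigl => -[q c] /=; apply/idP/idP.
  case/andP => pm /eqP [e1 e2]; have lt_c := step_index_lt pm.
  by rewrite -e1 inD_below_mul_step_index //= -e2 inordK; lia.
case/andP => qm lt_c; have lt_c' : (c < 2 * m + 2)%N by rewrite addn2.
rewrite inD_below_mul_step ?step_index_mul ?mul_stepK ?inord_val ?eqxx //.
by move: qm; rewrite inD_belowS => /andP [].
Qed.

(* The exponent of [x] is not truncated on [inD_below m], by [cycDp_inD_below]. *)
Definition cyc_weight (R : comNzRingType) (x y : R) (m : nat) (p : SP N) : R :=
  x ^+ (cycDp p + m - N.+1) * y ^+ (N - cycDp p).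

Lemma sum_cyc_weight_step (R : comNzRingType) (x y : R) q (m : 'I_N) :
  (0 < m)%N -> inD_below m q ->
  \sum_(c < (2 * m).+2) cyc_weight x y m.+1 (sp_mul q (step m c))
  = cyc_weight x y m q * (x + (2 * m + 1)%:R * y).
Proof.
move=> m0 qm; have lt_q := cycDp_inD_below m0 (ltnW (ltn_ord m)) qm.
have le_q := cycDp_le q.
rewrite big_ord_recl (_ : step m 0 = sp_one N) // sp_mul1.
rewrite (eq_bigr (fun _ => y * cyc_weight x y m q)) => [|i _]; last first.
  have lt_i : (1 + i < 2 * m + 2)%N by have := ltn_ord i; lia.
  have /= cq := cycDp_mul_step m0 lt_i qm.
  rewrite (_ : bump 0 i = 1 + i)%N // /cyc_weight.
  rewrite (_ : cycDp _ + m.+1 - N.+1 = cycDp q + m - N.+1)%N; last by lia.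
  rewrite (_ : N - cycDp _ = (N - cycDp q).+1)%N; last by lia.
  by rewrite exprS mulrCA.
rewrite sumr_const card_ord /cyc_weight.
rewrite (_ : cycDp q + m.+1 - N.+1 = (cycDp q + m - N.+1).+1)%N; last by lia.
rewrite exprS -mulr_natl; ring.
Qed.

Lemma sum_cyc_weight (R : comNzRingType) (x y : R) m : (0 < m)%N -> (m <= N)%N ->
  \sum_(p | inD_below m p) cyc_weight x y m p = \prod_(1 <= i < m) (x + (2 * i + 1)%:R * y).
Proof.
elim: m => [//|m IH] _ lt_mN; case: (posnP m) => [->|m0].
  rewrite (big_pred1 (sp_one N)) => [|p]; last by rewrite inD_below1.
  by rewrite /cyc_weight cycDp_one addn1 !subnn big_geq // mulr1.
rewrite (sum_inD_belowS _ (m := Ordinal lt_mN)) //.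
rewrite (eq_bigr _ (fun q qm => sum_cyc_weight_step x y (m := Ordinal lt_mN) m0 qm)) -big_distrl /=.
by rewrite IH // ?(ltnW lt_mN) // big_nat_recr.
Qed.

Lemma sum_inD_cyc_weight (R : comNzRingType) (x y : R) :
  \sum_(p | inD p) cyc_weight x y N p = \prod_(2 <= i < N.+1) (x + (2 * i - 1)%N%:R * y).
Proof.
rewrite -(eq_bigl _ _ (@inD_belowN n)) sum_cyc_weight // [RHS]big_add1 /=.
by apply: eq_bigr => i _; congr (x + _%:R * y); lia.
Qed.

End GeneratingFunction.

Lemma find_iota_least (P : pred nat) K k : k < K -> P k ->
  (forall j, P j -> k <= j) -> find P (iota 0 K) = k.
Proof.
move=> lt_kK Pk least; have hasP : has P (iota 0 K).
  by apply/hasP; exists k; rewrite ?mem_iota.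
have lt_fK : find P (iota 0 K) < K by rewrite -[X in _ < X](size_iota 0 K) -has_find.
apply/eqP; rewrite eqn_leq; apply/andP; split.
  by rewrite leqNgt; apply/negP => /(before_find 0); rewrite nth_iota // Pk.
by apply: least; have := nth_find 0 hasP; rewrite nth_iota.
Qed.

Lemma ellD_cycDp n (p : SP n.+1) : inD p -> ellD p = (n.+1 - cycDp p)%N.
Proof.
move=> pD; have pN : inD_below n.+1 p by rewrite inD_belowN.
apply: find_iota_least => [|| j /existsP [w /andP [gen_w /eqP wp]]].
- rewrite card_prod card_ffun card_bool card_ord.
  have perm_gt0 : 0 < #|{perm 'I_n.+1}| by apply/card_gt0P; exists 1%g.
  apply: leq_ltn_trans (leq_subr _ _) (leq_trans (ltn_expl _ (ltnSn 1)) _).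
  by rewrite leq_pmull.
- have [w [gen_w wp size_w]] := inD_below_word (ltn0Sn n) (leqnn _) pN.
  by apply/existsP; exists (Tuple (introT eqP size_w)); rewrite /= gen_w wp eqxx.
- by have := cycDp_word gen_w; rewrite wp size_tuple; lia.
Qed.
Local Open Scope ring_scope.

Theorem corollary6p9 (n : nat) : (1 <= n)%N ->
  (\sum_(p : SP n | inD p) 'X^(cycDp p)
     = 'X * \prod_(2 <= i < n.+1) ('X + ((2 * i - 1)%N%:R)%:P) :> {poly int})
  /\
  (\sum_(p : SP n | inD p) 'X^(ellD p)
     = \prod_(2 <= i < n.+1) (1 + (2 * i - 1)%N%:R *: 'X) :> {poly int}).
Proof.
case: n => [//|n] _; split.
  rewrite [in RHS](eq_bigr (fun i => 'X + (2 * i - 1)%N%:R * 1)) => [|i _]; last first.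
    by rewrite polyC_natr mulr1.
  rewrite -sum_inD_cyc_weight big_distrr /=; apply: eq_bigr => p _.
  by rewrite /cyc_weight expr1n mulr1 -exprS; congr ('X ^+ _); have := cycDp_gt0 p; lia.
rewrite (eq_bigr (fun i => 1 + (2 * i - 1)%N%:R * 'X)) => [|i _]; last first.
  by rewrite -mul_polyC polyC_natr.
rewrite -sum_inD_cyc_weight; apply: eq_bigr => p pD.
by rewrite /cyc_weight expr1n mul1r ellD_cycDp.
Qed.
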